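(* Let $g$ be the Diamond–Montgomery–Vorhauer function defined below. Assume $\rho=\beta+\mathrm{i}\gamma$ with $\beta\in[1/2,1)$ and $\gamma\ge1$, and let $a\ge4$. Then for $x\ge\mathrm{e}^{5a}$, \[-\int_{1}^{x}\frac{g(u^{1/a})}{a}(\log u)u^{\beta-1}\cos(\gamma\log u)\,\mathrm{d}u=-\frac{x^{\beta}\sin(\gamma\log x)}{\gamma}+O\Bigl(\frac{x^{\beta-1/(2a)}}{\gamma}+\frac{x^{\beta}}{\gamma^{2}}+\mathrm{e}^{5a\beta}\Bigr),\] while for $\mathrm{e}^{a}\le x<\mathrm{e}^{5a}$, \[-\int_{1}^{x}\frac{g(u^{1/a})}{a}(\log u)u^{\beta-1}\cos(\gamma\log u)\,\mathrm{d}u=O\Bigl(\frac{x^{\beta}}{\gamma}\Bigr).\] The implied constants are absolute (independent of $\rho$ and $a$).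
   Context: Let $G(z)=1-\frac{\mathrm{e}^{-z}-\mathrm{e}^{-2z}}{z}$. The function $g$ is the function supported on $[\mathrm{e},\infty)$ such that $\log G(z)=-\int_{1}^{\infty}g(x)x^{-z-1}\,\mathrm{d}x$ (for $\Re z$ large). It is known (Diamond–Montgomery–Vorhauer) that $g$ is nonnegative, continuous on $(\mathrm{e}^{2},\infty)$, continuously differentiable on $(\mathrm{e}^{4},\infty)$, on each interval $(\mathrm{e}^{m},\mathrm{e}^{m+1})$ ($m\ge1$ integer) is a polynomial in $\log x$ of degree at most $m-1$, and satisfies $g(x)\log x=1+O(x^{-1/2})$ for $x\ge\mathrm{e}^2$ and $(g(x)\log x)'\ll x^{-3/2}$ for $x\ge\mathrm{e}^5$. *)

From Stdlib Require Import Reals.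
From Coquelicot Require Import Coquelicot.
Open Scope R_scope.

Definition DMV_G (z : R) : R := 1 - (exp (- z) - exp (- (2 * z))) / z.

(* The defining property of the Diamond--Montgomery--Vorhauer function g:
   g is supported on [e, oo) and, for z large,
     log G(z) = - int_1^oo g(x) x^{-z-1} dx
   (stated for real z on a half-line; by Lerch's uniqueness theorem for the
   Laplace transform this determines g up to a null set). *)
Definition is_DMV_g (g : R -> R) : Prop :=
  (forall x, x < exp 1 -> g x = 0) /\
  exists z0 : R, 0 < z0 /\
    forall z : R, z0 <= z ->
      is_RInt_gen (fun x => g x * Rpower x (- z - 1))
                  (at_point 1) (Rbar_locally p_infty) (- ln (DMV_G z)).

Definition DMV_g_known_props (g : R -> R) : Prop :=
  (forall x, 0 <= g x) /\
  (forall x, exp 2 < x -> continuous g x) /\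
  (forall x, exp 4 < x -> ex_derive g x /\ continuous (Derive g) x) /\
  (forall m : nat, (1 <= m)%nat -> exists p : nat -> R,
     forall x, exp (INR m) < x < exp (INR m + 1) ->
       g x = sum_f_R0 (fun k => p k * ln x ^ k) (m - 1)) /\
  (exists K : R, forall x, exp 2 <= x ->
     Rabs (g x * ln x - 1) <= K * Rpower x (- (1/2))) /\
  (exists K : R, forall x, exp 5 <= x ->
     ex_derive (fun y => g y * ln y) x /\
     Rabs (Derive (fun y => g y * ln y) x) <= K * Rpower x (- (3/2))).

Definition DMV_I (g : R -> R) (beta gamma a x : R) : R :=
  - RInt (fun u => g (Rpower u (1 / a)) / a * ln u * Rpower u (beta - 1)
                   * cos (gamma * ln u)) 1 x.

From Stdlib Require Import Reals Lra Lia.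
From Coquelicot Require Import Coquelicot.
Open Scope R_scope.

(* Write the integrand as w(u) u^(b-1) cos(c log u) with w(u) = g(v) log v, v = u^(1/a),
   and integrate by parts against the explicit primitive
   phi(u) = u^b (b cos(c log u) + c sin(c log u)) / (b^2 + c^2), which satisfies
   |phi(u)| <= 2 u^b / c and phi(u) = u^b sin(c log u) / c + O(u^b / c^2).
   The integrand vanishes on [1, e^a] since g is supported on [e, oo).  On each
   [e^(ma), e^((m+1)a)], 1 <= m <= 4, w(u) = Q(log u / a) with Q(t) = t P_m(t) a
   polynomial, so w and u w'(u) are bounded and each piece is O(x^b / c).  Beyond e^(5a),
   w(u) = 1 + O(u^(-1/(2a))) and w'(u) = O(u^(-1-1/(2a))): the boundary term at x gives
   the main term x^b sin(c log x) / c up to O(x^(b-1/(2a)) / c + x^b / c^2), the one at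
   e^(5a) is O(e^(5ab)), and the remaining integral is O(x^(b-1/(2a)) / c). *)

Definition osc_kernel (b c u : R) : R := Rpower u (b - 1) * cos (c * ln u).

Definition osc_prim (b c u : R) : R :=
  Rpower u b * (b * cos (c * ln u) + c * sin (c * ln u)) / (b ^ 2 + c ^ 2).

Lemma Rpower_sub1 (u s : R) : 0 < u -> Rpower u (s - 1) = Rpower u s / u.
Proof.
  intros Hu. unfold Rminus. rewrite Rpower_plus, Rpower_Ropp, Rpower_1 by exact Hu.
  reflexivity.
Qed.

Lemma Rpower_gt_0 (u y : R) : 0 < Rpower u y.
Proof. apply exp_pos. Qed.

Lemma continuous_of_is_derive (f : R -> R) (x l : R) : is_derive f x l -> continuous f x.
Proof.
  intros H. apply (ex_derive_continuous (K := R_AbsRing) (V := R_NormedModule)).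
  exists l. exact H.
Qed.

Lemma is_derive_osc_prim (b c u : R) : 0 < u -> c <> 0 ->
  is_derive (osc_prim b c) u (osc_kernel b c u).
Proof.
  intros Hu Hc. unfold osc_prim, osc_kernel. rewrite Rpower_sub1 by exact Hu.
  unfold Rpower. auto_derive.
  - repeat split; lra.
  - assert (0 < b ^ 2 + c ^ 2) by nra. field. lra.
Qed.

Lemma continuous_osc_prim (b c u : R) : 0 < u -> c <> 0 -> continuous (osc_prim b c) u.
Proof. intros Hu Hc. exact (continuous_of_is_derive _ _ _ (is_derive_osc_prim b c u Hu Hc)). Qed.

Lemma continuous_osc_kernel (b c u : R) : 0 < u -> continuous (osc_kernel b c) u.
Proof.
  intros Hu. apply (continuous_of_is_derive _ _ (Derive (osc_kernel b c) u)).
  apply Derive_correct. unfold osc_kernel, Rpower. auto_derive. repeat split; lra.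
Qed.

Lemma Rabs_lin_cos_sin_le (p q t : R) :
  Rabs (p * cos t + q * sin t) <= Rabs p + Rabs q.
Proof.
  eapply Rle_trans; [apply Rabs_triang|]. rewrite !Rabs_mult.
  pose proof (Rabs_pos p). pose proof (Rabs_pos q).
  assert (Rabs (cos t) <= 1) by (apply Rabs_le; apply COS_bound).
  assert (Rabs (sin t) <= 1) by (apply Rabs_le; apply SIN_bound).
  nra.
Qed.

Lemma Rabs_osc_prim_le (b c u : R) : 0 <= b <= 1 -> 1 <= c ->
  Rabs (osc_prim b c u) <= 2 * Rpower u b / c.
Proof.
  intros Hb Hc. unfold osc_prim.
  pose proof (Rpower_gt_0 u b) as Hp.
  pose proof (Rabs_lin_cos_sin_le b c (c * ln u)) as Hl.
  rewrite (Rabs_pos_eq b), (Rabs_pos_eq c) in Hl by lra.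
  rewrite Rabs_div by nra.
  rewrite Rabs_mult, (Rabs_pos_eq (Rpower u b)), (Rabs_pos_eq (b ^ 2 + c ^ 2)) by nra.
  apply Rle_div_l; [nra|].
  replace (2 * Rpower u b / c * (b ^ 2 + c ^ 2)) with (Rpower u b * (2 * (b ^ 2 + c ^ 2) / c))
    by (field; lra).
  apply Rmult_le_compat_l; [lra|].
  apply Rle_trans with (2 * c); [lra|].
  apply (Rle_div_r (2 * c)); [lra|]. nra.
Qed.

Lemma Rabs_osc_prim_sub_le (b c u : R) : 0 <= b <= 1 -> 1 <= c ->
  Rabs (osc_prim b c u - Rpower u b * sin (c * ln u) / c) <= 2 * Rpower u b / c ^ 2.
Proof.
  intros Hb Hc.
  pose proof (Rpower_gt_0 u b) as Hp.
  replace (osc_prim b c u - Rpower u b * sin (c * ln u) / c)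
    with (Rpower u b * b * (c * cos (c * ln u) + - b * sin (c * ln u)) / (c * (b ^ 2 + c ^ 2)))
    by (unfold osc_prim; field; nra).
  pose proof (Rabs_lin_cos_sin_le c (- b) (c * ln u)) as Hl.
  rewrite Rabs_Ropp, (Rabs_pos_eq b), (Rabs_pos_eq c) in Hl by lra.
  rewrite Rabs_div by nra. rewrite !Rabs_mult, (Rabs_pos_eq (Rpower u b)), (Rabs_pos_eq b),
    (Rabs_pos_eq c), (Rabs_pos_eq (b ^ 2 + c ^ 2)) by nra.
  apply Rle_div_l; [nra|].
  replace (2 * Rpower u b / c ^ 2 * (c * (b ^ 2 + c ^ 2)))
    with (Rpower u b * (2 * (b ^ 2 + c ^ 2) / c))
    by (field; lra).
  rewrite Rmult_assoc. apply Rmult_le_compat_l; [lra|].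
  apply Rle_trans with (b * (2 * c)); [apply Rmult_le_compat_l; lra|].
  apply (Rle_div_r (b * (2 * c))); [lra|]. nra.
Qed.

Lemma is_RInt_osc_by_parts (h h' : R -> R) (b c lo hi : R) : 0 < lo <= hi -> c <> 0 ->
  (forall u, lo <= u <= hi -> is_derive h u (h' u)) ->
  (forall u, lo <= u <= hi -> continuous h' u) ->
  is_RInt (fun u => h u * osc_kernel b c u) lo hi
    (h hi * osc_prim b c hi - h lo * osc_prim b c lo
     - RInt (fun u => h' u * osc_prim b c u) lo hi).
Proof.
  intros Hlo Hc Hd Hd'.
  assert (Hprod : is_RInt (fun u => h' u * osc_prim b c u + h u * osc_kernel b c u) lo hi
                    (h hi * osc_prim b c hi - h lo * osc_prim b c lo)).
  { apply (is_RInt_derive (fun u => h u * osc_prim b c u)).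
    - intros u Hu. rewrite Rmin_left, Rmax_right in Hu by lra.
      apply (is_derive_mult h (osc_prim b c)).
      + apply Hd; lra.
      + apply is_derive_osc_prim; lra.
      + intros; apply Rmult_comm.
    - intros u Hu. rewrite Rmin_left, Rmax_right in Hu by lra.
      apply (continuous_plus (V := R_NormedModule) (fun u => h' u * osc_prim b c u));
        apply (continuous_mult (K := R_AbsRing)).
      + apply Hd'; lra.
      + apply continuous_osc_prim; lra.
      + apply (continuous_of_is_derive _ _ (h' u)), Hd; lra.
      + apply continuous_osc_kernel; lra. }
  assert (Hrem : is_RInt (fun u => h' u * osc_prim b c u) lo hi
                   (RInt (fun u => h' u * osc_prim b c u) lo hi)).
  { apply (RInt_correct (V := R_CompleteNormedModule)), ex_RInt_continuous.
    intros u Hu. rewrite Rmin_left, Rmax_right in Hu by lra.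
    apply (continuous_mult (K := R_AbsRing)); [apply Hd'; lra|apply continuous_osc_prim; lra]. }
  eapply is_RInt_ext; [|exact (is_RInt_minus _ _ _ _ _ _ Hprod Hrem)].
  intros u _. unfold minus, plus, opp; simpl. ring.
Qed.

Lemma is_RInt_Rpower (s lo hi : R) : 0 < lo <= hi -> 0 < s ->
  is_RInt (fun u => Rpower u (s - 1)) lo hi ((Rpower hi s - Rpower lo s) / s).
Proof.
  intros Hlo Hs.
  replace ((Rpower hi s - Rpower lo s) / s) with (Rpower hi s / s - Rpower lo s / s)
    by (field; lra).
  apply (is_RInt_derive (fun u => Rpower u s / s)).
  - intros u Hu. rewrite Rmin_left, Rmax_right in Hu by lra.
    rewrite Rpower_sub1 by lra. unfold Rpower. auto_derive; [lra|]. field. lra.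
  - intros u Hu. rewrite Rmin_left, Rmax_right in Hu by lra.
    apply (continuous_of_is_derive _ _ (Derive (fun u => Rpower u (s - 1)) u)), Derive_correct.
    unfold Rpower. auto_derive. lra.
Qed.

Lemma Rabs_RInt_deriv_osc_prim_le (h' : R -> R) (b c s D lo hi : R) :
  0 < lo <= hi -> 0 <= b <= 1 -> 1 <= c -> 0 < s ->
  (forall u, lo <= u <= hi -> continuous h' u) ->
  (forall u, lo <= u <= hi -> Rabs (h' u) <= D * Rpower u (s - b - 1)) ->
  Rabs (RInt (fun u => h' u * osc_prim b c u) lo hi) <= 2 * D * Rpower hi s / (c * s).
Proof.
  intros Hlo Hb Hc Hs Hcont Hbound.
  assert (HD : 0 <= D).
  { specialize (Hbound lo ltac:(lra)). pose proof (Rabs_pos (h' lo)).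
    pose proof (Rpower_gt_0 lo (s - b - 1)). nra. }
  pose proof (is_RInt_Rpower s lo hi Hlo Hs) as Hpow.
  eapply Rle_trans; [apply abs_RInt_le; [lra|]|].
  { apply (ex_RInt_continuous (V := R_CompleteNormedModule)).
    intros u Hu. rewrite Rmin_left, Rmax_right in Hu by lra.
    apply (continuous_mult (K := R_AbsRing)); [apply Hcont; lra|apply continuous_osc_prim; lra]. }
  apply Rle_trans with (RInt (fun u => 2 * D / c * Rpower u (s - 1)) lo hi).
  - apply RInt_le; [lra| |eexists; apply (is_RInt_scal _ _ _ _ _ Hpow)|].
    + apply (ex_RInt_continuous (V := R_CompleteNormedModule)).
      intros u Hu. rewrite Rmin_left, Rmax_right in Hu by lra.
      apply (continuous_comp _ Rabs); [|apply continuous_Rabs].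
      apply (continuous_mult (K := R_AbsRing)); [apply Hcont; lra|apply continuous_osc_prim; lra].
    + intros u Hu. rewrite Rabs_mult.
      pose proof (Rabs_osc_prim_le b c u Hb Hc). pose proof (Hbound u ltac:(lra)).
      replace (2 * D / c * Rpower u (s - 1)) with (D * Rpower u (s - b - 1) * (2 * Rpower u b / c)).
      * apply Rmult_le_compat; auto using Rabs_pos.
      * replace (s - 1) with ((s - b - 1) + b) by ring. rewrite Rpower_plus. field. lra.
  - rewrite (is_RInt_unique _ _ _ _ (is_RInt_scal _ _ _ _ _ Hpow)).
    unfold scal; simpl; unfold mult; simpl.
    pose proof (Rpower_gt_0 lo s).
    apply Rle_div_r with (a := 2 * D / c * ((Rpower hi s - Rpower lo s) / s)); [nra|].
    replace (2 * D / c * ((Rpower hi s - Rpower lo s) / s) * (c * s))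
      with (2 * D * (Rpower hi s - Rpower lo s)) by (field; lra).
    nra.
Qed.

Definition osc_dominated (F : R -> R) (M b c lo hi : R) : Prop :=
  ex_RInt F lo hi /\ Rabs (RInt F lo hi) <= M * Rpower hi b / c.

Lemma osc_dominated_le (F : R -> R) (M M' b c lo hi : R) : M <= M' -> 0 < c ->
  osc_dominated F M b c lo hi -> osc_dominated F M' b c lo hi.
Proof.
  intros HM Hc [Hex Hle]. split; [exact Hex|]. eapply Rle_trans; [exact Hle|].
  apply Rmult_le_compat_r; [left; apply Rinv_0_lt_compat; lra|].
  apply Rmult_le_compat_r; [left; apply Rpower_gt_0|exact HM].
Qed.

Lemma osc_dominated_Chasles (F : R -> R) (M1 M2 b c lo mid hi : R) :
  lo <= mid <= hi -> 0 < mid -> 0 <= b -> 0 < c -> 0 <= M1 ->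
  osc_dominated F M1 b c lo mid -> osc_dominated F M2 b c mid hi ->
  osc_dominated F (M1 + M2) b c lo hi.
Proof.
  intros Hmid Hmid0 Hb Hc HM1 [Hex1 Hle1] [Hex2 Hle2].
  split; [exact (ex_RInt_Chasles F lo mid hi Hex1 Hex2)|].
  rewrite <- (RInt_Chasles F lo mid hi Hex1 Hex2). unfold plus; simpl.
  assert (Rpower mid b <= Rpower hi b) by (apply Rle_Rpower_l; lra).
  assert (M1 * Rpower mid b / c <= M1 * Rpower hi b / c).
  { apply Rmult_le_compat_r; [left; apply Rinv_0_lt_compat; lra|]. apply Rmult_le_compat_l; lra. }
  eapply Rle_trans; [apply Rabs_triang|].
  replace ((M1 + M2) * Rpower hi b / c) with (M1 * Rpower hi b / c + M2 * Rpower hi b / c)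
    by (field; lra).
  lra.
Qed.

Definition dmv_integrand (g : R -> R) (b c a u : R) : R :=
  g (Rpower u (1 / a)) / a * ln u * Rpower u (b - 1) * cos (c * ln u).

Lemma dmv_integrand_eq (g : R -> R) (b c a u : R) : 0 < a ->
  dmv_integrand g b c a u
  = g (Rpower u (1 / a)) * ln (Rpower u (1 / a)) * osc_kernel b c u.
Proof. intros Ha. unfold dmv_integrand, osc_kernel. rewrite ln_Rpower. field. lra. Qed.

Lemma exp_le_compat (x y : R) : x <= y -> exp x <= exp y.
Proof. intros [Hlt|Heq]; [left; apply exp_increasing, Hlt|rewrite Heq; right; reflexivity]. Qed.

Lemma ln_exp_div (a t : R) : 0 < a -> ln (exp (a * t)) / a = t.
Proof. intros Ha. rewrite ln_exp. field. lra. Qed.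

Lemma ln_div_le_compat (a u v : R) : 0 < a -> 0 < u <= v -> ln u / a <= ln v / a.
Proof.
  intros Ha Huv. apply Rmult_le_compat_r; [left; apply Rinv_0_lt_compat; lra|].
  apply ln_le; lra.
Qed.

Lemma ln_div_lt_compat (a u v : R) : 0 < a -> 0 < u < v -> ln u / a < ln v / a.
Proof.
  intros Ha Huv. apply Rmult_lt_compat_r; [apply Rinv_0_lt_compat; lra|].
  apply ln_increasing; lra.
Qed.

Lemma Rpower_inv_eq (a u : R) : Rpower u (1 / a) = exp (ln u / a).
Proof. unfold Rpower, Rdiv. f_equal. ring. Qed.

Lemma continuous_bounded_on (f : R -> R) (lo hi : R) : lo <= hi -> (forall t, continuous f t) ->
  exists M, 0 <= M /\ forall t, lo <= t <= hi -> Rabs (f t) <= M.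
Proof.
  intros Hlh Hf.
  destruct (continuity_ab_maj (fun t => Rabs (f t)) lo hi Hlh) as [t0 [Hmax _]].
  { intros t _. apply continuity_pt_filterlim.
    apply (continuous_comp f Rabs); [apply Hf|apply continuous_Rabs]. }
  exists (Rabs (f t0)). split; [apply Rabs_pos|exact Hmax].
Qed.

Definition dmv_piece_bounded (g : R -> R) (m M : R) : Prop :=
  forall b c a lo hi, 1/2 <= b <= 1 -> 1 <= c -> 1 <= a ->
    exp (a * m) <= lo -> lo <= hi -> hi <= exp (a * (m + 1)) ->
    osc_dominated (dmv_integrand g b c a) M b c lo hi.

Lemma osc_dominated_by_parts (F h h' : R -> R) (A D b c lo hi : R) :
  0 < lo <= hi -> 1/2 <= b <= 1 -> 1 <= c ->
  (forall u, lo <= u <= hi -> is_derive h u (h' u)) ->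
  (forall u, lo <= u <= hi -> continuous h' u) ->
  (forall u, lo <= u <= hi -> Rabs (h u) <= A) ->
  (forall u, lo <= u <= hi -> Rabs (h' u) <= D / u) ->
  (forall u, lo < u < hi -> h u * osc_kernel b c u = F u) ->
  osc_dominated F (4 * A + 4 * D) b c lo hi.
Proof.
  intros Hlo Hb Hc Hd Hd' HA HD HF.
  pose proof (is_RInt_osc_by_parts h h' b c lo hi Hlo ltac:(lra) Hd Hd') as Hparts.
  apply (is_RInt_ext _ F) in Hparts;
    [|intros u Hu; rewrite Rmin_left, Rmax_right in Hu by lra; apply HF; lra].
  split; [eexists; exact Hparts|]. rewrite (is_RInt_unique _ _ _ _ Hparts).
  pose proof (Rpower_gt_0 hi b).
  assert (Hrem : Rabs (RInt (fun u => h' u * osc_prim b c u) lo hi)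
                 <= 2 * D * Rpower hi b / (c * b)).
  { apply Rabs_RInt_deriv_osc_prim_le; try lra; [exact Hd'|].
    intros u Hu. replace (b - b - 1) with (Ropp 1) by ring.
    rewrite Rpower_Ropp, Rpower_1 by lra. apply HD, Hu. }
  assert (HD0 : 0 <= D).
  { pose proof (HD lo ltac:(lra)). pose proof (Rabs_pos (h' lo)).
    apply (Rmult_le_reg_r (/ lo)); [apply Rinv_0_lt_compat; lra|]. lra. }
  assert (Hend : forall u, lo <= u <= hi ->
                 Rabs (h u * osc_prim b c u) <= A * (2 * Rpower hi b / c)).
  { intros u Hu. rewrite Rabs_mult. apply Rmult_le_compat; try apply Rabs_pos; [apply HA, Hu|].
    eapply Rle_trans; [apply Rabs_osc_prim_le; lra|].
    apply Rmult_le_compat_r; [left; apply Rinv_0_lt_compat; lra|].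
    apply Rmult_le_compat_l; [lra|]. apply Rle_Rpower_l; lra. }
  pose proof (Hend lo ltac:(lra)). pose proof (Hend hi ltac:(lra)).
  assert (2 * D * Rpower hi b / (c * b) <= 4 * D * Rpower hi b / c).
  { apply Rle_div_l; [nra|].
    replace (4 * D * Rpower hi b / c * (c * b)) with (2 * D * Rpower hi b * (2 * b))
      by (field; lra).
    rewrite <- (Rmult_1_r (2 * D * Rpower hi b)) at 1. apply Rmult_le_compat_l; nra. }
  unfold Rminus. eapply Rle_trans; [apply Rabs_triang|]. rewrite Rabs_Ropp.
  eapply Rle_trans; [apply Rplus_le_compat_r, Rabs_triang|]. rewrite Rabs_Ropp.
  replace ((4 * A + 4 * D) * Rpower hi b / c)
    with (A * (2 * Rpower hi b / c) + A * (2 * Rpower hi b / c) + 4 * D * Rpower hi b / c)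
    by (field; lra).
  lra.
Qed.

Lemma dmv_piece_bounded_of_profile (g Q Q' : R -> R) (m : R) :
  (forall t, is_derive Q t (Q' t)) -> (forall t, continuous Q' t) ->
  (forall v, exp m < v < exp (m + 1) -> g v * ln v = Q (ln v)) ->
  exists M, 0 <= M /\ dmv_piece_bounded g m M.
Proof.
  intros HQ HQ' Hg.
  destruct (continuous_bounded_on Q m (m + 1)) as [MQ [HMQ0 HMQ]]; [lra| |].
  { intros t. exact (continuous_of_is_derive _ _ _ (HQ t)). }
  destruct (continuous_bounded_on Q' m (m + 1) ltac:(lra) HQ') as [MD [HMD0 HMD]].
  exists (4 * MQ + 4 * MD). split; [lra|].
  intros b c a lo hi Hb Hc Ha Hlo Hlohi Hhi.
  pose proof (exp_pos (a * m)).
  assert (Hscale : forall u, lo <= u <= hi -> m <= ln u / a <= m + 1).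
  { intros u Hu. rewrite <- (ln_exp_div a m), <- (ln_exp_div a (m + 1)) at 1 by lra.
    split; apply ln_div_le_compat; lra. }
  apply (osc_dominated_by_parts _ (fun u => Q (ln u / a)) (fun u => Q' (ln u / a) / (a * u)));
    try lra.
  - intros u Hu.
    assert (Hlog : is_derive (fun u => ln u / a) u (/ (a * u))).
    { auto_derive; [lra|]. field. lra. }
    pose proof (is_derive_comp Q (fun u => ln u / a) u _ _ (HQ (ln u / a)) Hlog) as Hcomp.
    unfold scal in Hcomp; simpl in Hcomp; unfold mult in Hcomp; simpl in Hcomp.
    replace (Q' (ln u / a) / (a * u)) with (/ (a * u) * Q' (ln u / a)) by (field; lra).
    exact Hcomp.
  - intros u Hu. apply (continuous_mult (K := R_AbsRing) (fun u => Q' (ln u / a))).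
    + apply (continuous_comp (fun u => ln u / a) Q'); [|apply HQ'].
      apply (continuous_of_is_derive _ _ (/ (a * u))). auto_derive; [lra|]. field. lra.
    + apply (continuous_of_is_derive _ _ (Derive (fun u => / (a * u)) u)), Derive_correct.
      auto_derive. apply Rmult_integral_contrapositive; lra.
  - intros u Hu. apply HMQ, Hscale, Hu.
  - intros u Hu. rewrite Rabs_div, (Rabs_pos_eq (a * u)) by nra.
    apply Rle_div_l; [nra|]. pose proof (HMD _ (Hscale u Hu)).
    replace (MD / u * (a * u)) with (MD * a) by (field; lra). nra.
  - intros u Hu. rewrite dmv_integrand_eq, Rpower_inv_eq, ln_exp by lra.
    f_equal. symmetry. rewrite <- (ln_exp (ln u / a)) at 2 3. apply Hg.
    rewrite <- (ln_exp_div a m), <- (ln_exp_div a (m + 1)) at 1 by lra.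
    split; apply exp_increasing, ln_div_lt_compat; lra.
Qed.

Definition poly_eval (p : nat -> R) (n : nat) (t : R) : R := sum_f_R0 (fun k => p k * t ^ k) n.

Definition poly_deriv_eval (p : nat -> R) (n : nat) (t : R) : R :=
  sum_f_R0 (fun k => p k * (INR k * t ^ pred k)) n.

Lemma is_derive_poly_eval (p : nat -> R) (n : nat) (t : R) :
  is_derive (poly_eval p n) t (poly_deriv_eval p n t).
Proof.
  induction n as [|n IH]; unfold poly_eval, poly_deriv_eval; simpl.
  - auto_derive; [exact I|]. simpl. ring.
  - apply (is_derive_plus (fun t => sum_f_R0 (fun k => p k * t ^ k) n)); [exact IH|].
    auto_derive; [exact I|]. destruct n; simpl; ring.
Qed.

Lemma continuous_poly_deriv_eval (p : nat -> R) (n : nat) (t : R) :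
  continuous (poly_deriv_eval p n) t.
Proof.
  assert (Hterm : forall k, continuous (fun t => p k * (INR k * t ^ pred k)) t).
  { intros k. apply (continuous_of_is_derive _ _ (Derive (fun t => p k * (INR k * t ^ pred k)) t)).
    apply Derive_correct. auto_derive. exact I. }
  induction n as [|n IH]; unfold poly_deriv_eval; simpl; [apply Hterm|].
  apply (continuous_plus (V := R_NormedModule)
           (fun t => sum_f_R0 (fun k => p k * (INR k * t ^ pred k)) n));
    [exact IH|apply Hterm].
Qed.

Lemma dmv_piece_bounded_of_poly (g : R -> R) (p : nat -> R) (n : nat) (m : R) :
  (forall x, exp m < x < exp (m + 1) -> g x = poly_eval p n (ln x)) ->
  exists M, 0 <= M /\ dmv_piece_bounded g m M.
Proof.
  intros Hg.
  apply (dmv_piece_bounded_of_profile g (fun t => t * poly_eval p n t)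
           (fun t => 1 * poly_eval p n t + t * poly_deriv_eval p n t)).
  - intros t. apply (is_derive_mult (fun t => t) (poly_eval p n));
      [auto_derive; auto|apply is_derive_poly_eval|intros; apply Rmult_comm].
  - intros t. apply (continuous_plus (V := R_NormedModule) (fun t => 1 * poly_eval p n t));
      apply (continuous_mult (K := R_AbsRing)).
    + apply continuous_const.
    + apply (continuous_of_is_derive _ _ _ (is_derive_poly_eval p n t)).
    + apply continuous_id.
    + apply continuous_poly_deriv_eval.
  - intros v Hv. rewrite Hg by exact Hv. ring.
Qed.

Lemma dmv_integral_below_exp (g : R -> R) (b c a x : R) : (forall v, v < exp 1 -> g v = 0) ->
  0 < a -> 1 <= x <= exp a -> osc_dominated (dmv_integrand g b c a) 0 b c 1 x.
Proof.
  intros Hg Ha Hx.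
  assert (Hzero : forall u, Rmin 1 x < u < Rmax 1 x -> 0 = dmv_integrand g b c a u).
  { intros u Hu. rewrite Rmin_left, Rmax_right in Hu by lra.
    unfold dmv_integrand. rewrite Hg; [unfold Rdiv; ring|].
    rewrite Rpower_inv_eq. apply exp_increasing.
    rewrite <- (ln_exp_div a 1) by lra. apply ln_div_lt_compat; [lra|].
    rewrite Rmult_1_r. lra. }
  split.
  - exact (ex_RInt_ext _ _ _ _ Hzero (ex_RInt_const 1 x 0)).
  - rewrite <- (RInt_ext _ _ _ _ Hzero), RInt_const. unfold scal; simpl; unfold mult; simpl.
    rewrite Rmult_0_r, Rabs_R0. unfold Rdiv. rewrite !Rmult_0_l. lra.
Qed.

Lemma dmv_integral_initial_bound (g : R -> R) (N : nat) : (forall v, v < exp 1 -> g v = 0) ->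
  (forall m : nat, (1 <= m <= N)%nat -> exists M, 0 <= M /\ dmv_piece_bounded g (INR m) M) ->
  exists M, 0 <= M /\ forall b c a x, 1/2 <= b <= 1 -> 1 <= c -> 1 <= a ->
    1 <= x <= exp (a * (INR N + 1)) -> osc_dominated (dmv_integrand g b c a) M b c 1 x.
Proof.
  intros Hsupp. induction N as [|N IH]; intros Hpieces.
  - exists 0. split; [lra|]. intros b c a x Hb Hc Ha Hx.
    simpl in Hx. rewrite Rplus_0_l, Rmult_1_r in Hx.
    apply dmv_integral_below_exp; [exact Hsupp|lra|exact Hx].
  - destruct IH as [M0 [HM0 Hlow]]; [intros m Hm; apply Hpieces; lia|].
    destruct (Hpieces (S N) ltac:(lia)) as [M1 [HM1 Hpiece]].
    exists (M0 + M1). split; [lra|]. intros b c a x Hb Hc Ha Hx.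
    rewrite S_INR in Hx, Hpiece.
    assert (1 <= exp (a * (INR N + 1))).
    { pose proof (pos_INR N). pose proof (exp_ineq1_le (a * (INR N + 1))). nra. }
    destruct (Rle_or_lt x (exp (a * (INR N + 1)))) as [Hsmall|Hlarge].
    + apply (osc_dominated_le _ M0); [lra|lra|]. apply Hlow; lra.
    + apply (osc_dominated_Chasles _ _ _ _ _ _ (exp (a * (INR N + 1)))); try lra.
      * apply Hlow; lra.
      * apply Hpiece; lra.
Qed.

Lemma Rpower_le_1 (u y : R) : 1 <= u -> y <= 0 -> Rpower u y <= 1.
Proof. intros Hu Hy. rewrite <- (Rpower_O u) by lra. apply Rle_Rpower; lra. Qed.

Lemma exp_2_lt_4_lt_5 : exp 2 < exp 4 < exp 5.
Proof. split; apply exp_increasing; lra. Qed.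

Section DmvTail.

Variables (g : R -> R) (K1 K2 : R).
Hypothesis g_continuous : forall x, exp 2 < x -> continuous g x.
Hypothesis g_C1 : forall x, exp 4 < x -> ex_derive g x /\ continuous (Derive g) x.
Hypothesis glog_near_1 :
  forall x, exp 2 <= x -> Rabs (g x * ln x - 1) <= K1 * Rpower x (- (1/2)).
Hypothesis glog_deriv_small : forall x, exp 5 <= x ->
  ex_derive (fun y => g y * ln y) x /\
  Rabs (Derive (fun y => g y * ln y) x) <= K2 * Rpower x (- (3/2)).

Variables (b c a : R).
Hypotheses (Hb : 1/2 <= b <= 1) (Hc : 1 <= c) (Ha : 4 <= a).

Let glog (v : R) : R := g v * ln v.
Let glog' (v : R) : R := Derive g v * ln v + g v / v.
Let weight (u : R) : R := glog (Rpower u (1 / a)).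
Let weight' (u : R) : R := glog' (Rpower u (1 / a)) * (Rpower u (1 / a) / (a * u)).

Lemma is_derive_glog (v : R) : exp 4 < v -> is_derive glog v (glog' v).
Proof.
  intros Hv. pose proof (exp_pos 4).
  apply (is_derive_mult g ln); [apply Derive_correct, g_C1, Hv| |intros; apply Rmult_comm].
  auto_derive; [lra|]. field. lra.
Qed.

Lemma continuous_glog' (v : R) : exp 4 < v -> continuous glog' v.
Proof.
  intros Hv. pose proof (exp_pos 4). destruct exp_2_lt_4_lt_5.
  apply (continuous_plus (V := R_NormedModule) (fun v => Derive g v * ln v));
    apply (continuous_mult (K := R_AbsRing)).
  - apply g_C1, Hv.
  - apply (continuous_of_is_derive _ _ (/ v)). auto_derive; [lra|]. field. lra.
  - apply g_continuous. lra.
  - apply (continuous_of_is_derive _ _ (- / v ^ 2)). auto_derive; [lra|]. field. lra.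
Qed.

Lemma Rpower_inv_ge_exp5 (u : R) : exp (5 * a) <= u -> exp 5 <= Rpower u (1 / a).
Proof.
  intros Hu. pose proof (exp_pos (5 * a)).
  rewrite Rpower_inv_eq. apply exp_le_compat.
  replace 5 with (ln (exp (a * 5)) / a) at 1 by (apply ln_exp_div; lra).
  apply ln_div_le_compat; [lra|]. rewrite Rmult_comm. lra.
Qed.

Lemma is_derive_Rpower_inv (u : R) : 0 < u ->
  is_derive (fun u => Rpower u (1 / a)) u (Rpower u (1 / a) / (a * u)).
Proof. intros Hu. unfold Rpower. auto_derive; [lra|]. field. lra. Qed.

Lemma is_derive_weight (u : R) : exp (5 * a) <= u -> is_derive weight u (weight' u).
Proof.
  intros Hu. pose proof (exp_pos (5 * a)). destruct exp_2_lt_4_lt_5.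
  pose proof (Rpower_inv_ge_exp5 u Hu).
  pose proof (is_derive_comp glog (fun u => Rpower u (1 / a)) u _ _
                (is_derive_glog (Rpower u (1 / a)) ltac:(lra))
                (is_derive_Rpower_inv u ltac:(lra))) as Hcomp.
  unfold scal in Hcomp; simpl in Hcomp; unfold mult in Hcomp; simpl in Hcomp.
  unfold weight'. rewrite Rmult_comm. exact Hcomp.
Qed.

Lemma continuous_weight' (u : R) : exp (5 * a) <= u -> continuous weight' u.
Proof.
  intros Hu. pose proof (exp_pos (5 * a)). destruct exp_2_lt_4_lt_5.
  pose proof (Rpower_inv_ge_exp5 u Hu).
  apply (continuous_mult (K := R_AbsRing) (fun u => glog' (Rpower u (1 / a)))).
  - apply (continuous_comp (fun u => Rpower u (1 / a)) glog').
    + exact (continuous_of_is_derive _ _ _ (is_derive_Rpower_inv u ltac:(lra))).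
    + apply continuous_glog'. lra.
  - apply (continuous_of_is_derive _ _ (Derive (fun u => Rpower u (1 / a) / (a * u)) u)).
    apply Derive_correct. unfold Rpower. auto_derive. repeat split; try lra.
    apply Rmult_integral_contrapositive; lra.
Qed.

Lemma Rabs_weight_sub1_le (u : R) : exp (5 * a) <= u ->
  Rabs (weight u - 1) <= Rabs K1 * Rpower u (- (1 / (2 * a))).
Proof.
  intros Hu. destruct exp_2_lt_4_lt_5. pose proof (Rpower_inv_ge_exp5 u Hu).
  eapply Rle_trans; [apply glog_near_1; lra|].
  rewrite Rpower_mult. replace (1 / a * - (1 / 2)) with (- (1 / (2 * a))) by (field; lra).
  apply Rmult_le_compat_r; [left; apply exp_pos|apply Rle_abs].
Qed.

Lemma Rabs_weight_le (u : R) : exp (5 * a) <= u -> Rabs (weight u) <= 1 + Rabs K1.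
Proof.
  intros Hu. pose proof (exp_ineq1_le (5 * a)).
  assert (Hsmall : Rpower u (- (1 / (2 * a))) <= 1).
  { apply Rpower_le_1; [lra|]. assert (0 < 1 / (2 * a)) by (apply Rdiv_lt_0_compat; lra). lra. }
  pose proof (Rabs_weight_sub1_le u Hu). pose proof (Rabs_pos K1).
  replace (weight u) with ((weight u - 1) + 1) by ring.
  eapply Rle_trans; [apply Rabs_triang|]. rewrite Rabs_R1.
  assert (Rabs K1 * Rpower u (- (1 / (2 * a))) <= Rabs K1) by nra.
  lra.
Qed.

Lemma Rabs_weight'_le (u : R) : exp (5 * a) <= u ->
  Rabs (weight' u) <= Rabs K2 * Rpower u ((b - 1 / (2 * a)) - b - 1).
Proof.
  intros Hu. destruct exp_2_lt_4_lt_5. pose proof (Rpower_inv_ge_exp5 u Hu) as Hv.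
  pose proof (exp_pos (5 * a)).
  destruct (glog_deriv_small _ Hv) as [_ Hder].
  fold glog in Hder.
  rewrite (is_derive_unique _ _ _ (is_derive_glog (Rpower u (1 / a)) ltac:(lra))) in Hder.
  unfold weight'. rewrite Rabs_mult, (Rabs_pos_eq (_ / _))
    by (left; apply Rdiv_lt_0_compat; [apply exp_pos|nra]).
  apply Rle_trans
    with (Rabs K2 * Rpower (Rpower u (1 / a)) (- (3 / 2)) * (Rpower u (1 / a) / (a * u))).
  { apply Rmult_le_compat_r; [left; apply Rdiv_lt_0_compat; [apply exp_pos|nra]|].
    eapply Rle_trans; [exact Hder|].
    apply Rmult_le_compat_r; [left; apply exp_pos|apply Rle_abs]. }
  replace ((b - 1 / (2 * a)) - b - 1) with (1 / a * - (3 / 2) + 1 / a + - (1)) by (field; lra).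
  rewrite !Rpower_plus, Rpower_mult, Rpower_Ropp, Rpower_1 by lra.
  pose proof (Rabs_pos K2). pose proof (exp_pos (1 / a * - (3 / 2) * ln u)).
  pose proof (exp_pos (1 / a * ln u)). unfold Rpower in *.
  set (p := exp (1 / a * - (3 / 2) * ln u)) in *. set (q := exp (1 / a * ln u)) in *.
  replace (Rabs K2 * p * (q / (a * u))) with (Rabs K2 * p * q * / u * / a) by (field; lra).
  rewrite <- (Rmult_1_r (Rabs K2 * (p * q * / u))), <- Rmult_assoc, <- Rmult_assoc.
  apply Rmult_le_compat; [| |lra|].
  - repeat apply Rmult_le_pos; try lra. left; apply Rinv_0_lt_compat; lra.
  - left; apply Rinv_0_lt_compat; lra.
  - rewrite <- Rinv_1. apply Rinv_le_contravar; lra.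
Qed.


Lemma Rabs_weight_osc_prim_sub_le (x : R) : exp (5 * a) <= x ->
  Rabs (weight x * osc_prim b c x - Rpower x b * sin (c * ln x) / c)
  <= 2 * Rabs K1 * (Rpower x (b - 1 / (2 * a)) / c) + 2 * (Rpower x b / c ^ 2).
Proof.
  intros Hx.
  replace (weight x * osc_prim b c x - Rpower x b * sin (c * ln x) / c)
    with ((weight x - 1) * osc_prim b c x + (osc_prim b c x - Rpower x b * sin (c * ln x) / c))
    by ring.
  eapply Rle_trans; [apply Rabs_triang|].
  apply Rplus_le_compat.
  - rewrite Rabs_mult.
    apply Rle_trans with (Rabs K1 * Rpower x (- (1 / (2 * a))) * (2 * Rpower x b / c)).
    { apply Rmult_le_compat; try apply Rabs_pos;
        [apply Rabs_weight_sub1_le; lra|apply Rabs_osc_prim_le; lra]. }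
    right. replace (b - 1 / (2 * a)) with (- (1 / (2 * a)) + b) by ring.
    rewrite Rpower_plus. field. lra.
  - eapply Rle_trans; [apply Rabs_osc_prim_sub_le; lra|]. right. field. lra.
Qed.

Lemma Rabs_weight_osc_prim_exp_le :
  Rabs (weight (exp (5 * a)) * osc_prim b c (exp (5 * a))) <= 2 * (1 + Rabs K1) * exp (5 * a * b).
Proof.
  pose proof (exp_pos (5 * a * b)). pose proof (Rabs_pos K1).
  assert (HEb : Rpower (exp (5 * a)) b = exp (5 * a * b))
    by (unfold Rpower; rewrite ln_exp; f_equal; ring).
  rewrite Rabs_mult.
  apply Rle_trans with ((1 + Rabs K1) * (2 * exp (5 * a * b))); [|lra].
  apply Rmult_le_compat; try apply Rabs_pos; [apply Rabs_weight_le; lra|].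
  eapply Rle_trans; [apply Rabs_osc_prim_le; lra|]. rewrite HEb.
  apply Rle_div_l; [lra|]. nra.
Qed.

Lemma Rabs_RInt_weight'_osc_prim_le (x : R) : exp (5 * a) <= x ->
  Rabs (RInt (fun u => weight' u * osc_prim b c u) (exp (5 * a)) x)
  <= 6 * Rabs K2 * (Rpower x (b - 1 / (2 * a)) / c).
Proof.
  intros Hx. pose proof (exp_pos (5 * a)). pose proof (Rabs_pos K2).
  set (s := b - 1 / (2 * a)). pose proof (Rpower_gt_0 x s).
  (* This is where a >= 4 is used: it makes 1/s < 3. *)
  assert (Hs : 3 / 8 <= s).
  { assert (1 / (2 * a) <= 1 / 8) by (apply Rle_div_l; [lra|]; unfold Rdiv; nra). unfold s. lra. }
  eapply Rle_trans.
  - apply (Rabs_RInt_deriv_osc_prim_le weight' b c s); try lra.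
    + intros u Hu. apply continuous_weight'. lra.
    + intros u Hu. apply Rabs_weight'_le. lra.
  - apply Rle_div_l; [nra|].
    replace (6 * Rabs K2 * (Rpower x s / c) * (c * s)) with (2 * Rabs K2 * Rpower x s * (3 * s))
      by (field; lra).
    rewrite <- (Rmult_1_r (2 * Rabs K2 * Rpower x s)) at 1.
    apply Rmult_le_compat_l; [nra|lra].
Qed.

Lemma dmv_tail_estimate (x : R) : exp (5 * a) <= x ->
  ex_RInt (dmv_integrand g b c a) (exp (5 * a)) x /\
  Rabs (RInt (dmv_integrand g b c a) (exp (5 * a)) x - Rpower x b * sin (c * ln x) / c)
  <= (2 + 2 * Rabs K1 + 6 * Rabs K2)
     * (Rpower x (b - 1 / (2 * a)) / c + Rpower x b / c ^ 2 + exp (5 * a * b)).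
Proof.
  intros Hx. pose proof (exp_pos (5 * a)).
  pose proof (is_RInt_osc_by_parts weight weight' b c (exp (5 * a)) x ltac:(lra) ltac:(lra)
                (fun u Hu => is_derive_weight u (proj1 Hu))
                (fun u Hu => continuous_weight' u (proj1 Hu))) as Hparts.
  apply (is_RInt_ext _ (dmv_integrand g b c a)) in Hparts;
    [|intros u _; symmetry; apply dmv_integrand_eq; lra].
  split; [eexists; exact Hparts|]. rewrite (is_RInt_unique _ _ _ _ Hparts).
  pose proof (Rabs_weight_osc_prim_sub_le x Hx).
  pose proof Rabs_weight_osc_prim_exp_le.
  pose proof (Rabs_RInt_weight'_osc_prim_le x Hx).
  set (X1 := Rpower x (b - 1 / (2 * a)) / c) in *.
  set (X2 := Rpower x b / c ^ 2) in *.
  set (X3 := exp (5 * a * b)) in *.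
  set (R0 := RInt (fun u => weight' u * osc_prim b c u) (exp (5 * a)) x) in *.
  set (S := Rpower x b * sin (c * ln x) / c) in *.
  replace (weight x * osc_prim b c x - weight (exp (5 * a)) * osc_prim b c (exp (5 * a)) - R0 - S)
    with ((weight x * osc_prim b c x - S) + - (weight (exp (5 * a)) * osc_prim b c (exp (5 * a)))
          + - R0) by ring.
  eapply Rle_trans; [apply Rabs_triang|]. rewrite Rabs_Ropp.
  eapply Rle_trans; [apply Rplus_le_compat_r, Rabs_triang|]. rewrite Rabs_Ropp.
  assert (0 <= X1) by (apply Rdiv_le_0_compat; [left; apply Rpower_gt_0|lra]).
  assert (0 <= X2) by (apply Rdiv_le_0_compat; [left; apply Rpower_gt_0|nra]).
  pose proof (Rabs_pos K1). pose proof (Rabs_pos K2).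
  replace ((2 + 2 * Rabs K1 + 6 * Rabs K2) * (X1 + X2 + X3))
    with (2 * Rabs K1 * X1 + 2 * X2 + 2 * (1 + Rabs K1) * X3 + 6 * Rabs K2 * X1
          + (2 * X1 + 2 * Rabs K1 * X2 + 6 * Rabs K2 * X2 + 6 * Rabs K2 * X3)) by ring.
  assert (0 <= 2 * X1 + 2 * Rabs K1 * X2 + 6 * Rabs K2 * X2 + 6 * Rabs K2 * X3).
  { pose proof (exp_pos (5 * a * b)). unfold X3 in *. nra. }
  lra.
Qed.

Lemma dmv_integral_asymptotic (M x : R) : 0 <= M -> exp (5 * a) <= x ->
  osc_dominated (dmv_integrand g b c a) M b c 1 (exp (5 * a)) ->
  Rabs (- RInt (dmv_integrand g b c a) 1 x - - (Rpower x b * sin (c * ln x)) / c)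
  <= (M + (2 + 2 * Rabs K1 + 6 * Rabs K2))
     * (Rpower x (b - 1 / (2 * a)) / c + Rpower x b / c ^ 2 + exp (5 * a * b)).
Proof.
  intros HM Hx [Hex1 Hle1].
  destruct (dmv_tail_estimate x Hx) as [Hex2 Hle2].
  rewrite <- (RInt_Chasles _ 1 (exp (5 * a)) x Hex1 Hex2).
  set (J1 := RInt (dmv_integrand g b c a) 1 (exp (5 * a))) in *.
  set (J2 := RInt (dmv_integrand g b c a) (exp (5 * a)) x) in *.
  change (plus J1 J2) with (J1 + J2).
  rewrite Rdiv_opp_l. replace (- (J1 + J2) - - (Rpower x b * sin (c * ln x) / c))
    with (- J1 + - (J2 - Rpower x b * sin (c * ln x) / c)) by ring.
  eapply Rle_trans; [apply Rabs_triang|]. rewrite !Rabs_Ropp.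
  assert (HE : Rpower (exp (5 * a)) b = exp (5 * a * b))
    by (unfold Rpower; rewrite ln_exp; f_equal; ring).
  rewrite HE in Hle1.
  assert (M * exp (5 * a * b) / c <= M * exp (5 * a * b)).
  { apply Rle_div_l; [lra|]. pose proof (exp_pos (5 * a * b)).
    assert (0 <= M * exp (5 * a * b)) by (apply Rmult_le_pos; lra). nra. }
  set (X1 := Rpower x (b - 1 / (2 * a)) / c) in *.
  set (X2 := Rpower x b / c ^ 2) in *.
  set (X3 := exp (5 * a * b)) in *.
  assert (0 <= M * (X1 + X2)).
  { assert (0 <= X1) by (apply Rdiv_le_0_compat; [left; apply Rpower_gt_0|lra]).
    assert (0 <= X2) by (apply Rdiv_le_0_compat; [left; apply Rpower_gt_0|nra]).
    apply Rmult_le_pos; lra. }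
  replace ((M + (2 + 2 * Rabs K1 + 6 * Rabs K2)) * (X1 + X2 + X3))
    with (M * (X1 + X2) + M * X3 + (2 + 2 * Rabs K1 + 6 * Rabs K2) * (X1 + X2 + X3)) by ring.
  lra.
Qed.

End DmvTail.

Theorem lemma4p2 (g : R -> R) (Hg : is_DMV_g g) (Hprops : DMV_g_known_props g) :
  exists C : R,
    forall beta gamma a x : R,
      1/2 <= beta < 1 -> 1 <= gamma -> 4 <= a ->
      (exp (5 * a) <= x ->
         Rabs (DMV_I g beta gamma a x
               - (- (Rpower x beta * sin (gamma * ln x)) / gamma))
         <= C * (Rpower x (beta - 1 / (2 * a)) / gamma
                 + Rpower x beta / gamma ^ 2
                 + exp (5 * a * beta))) /\
      (exp a <= x < exp (5 * a) ->
         Rabs (DMV_I g beta gamma a x) <= C * (Rpower x beta / gamma)).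
Proof.
  destruct Hg as [Hsupp _].
  destruct Hprops as [_ [Hcont [HC1 [Hpoly [[K1 HK1] [K2 HK2]]]]]].
  destruct (dmv_integral_initial_bound g 4 Hsupp) as [M [HM Hinit]].
  { intros m Hm. destruct (Hpoly m ltac:(lia)) as [p Hp].
    exact (dmv_piece_bounded_of_poly g p (m - 1) (INR m) Hp). }
  set (T := 2 + 2 * Rabs K1 + 6 * Rabs K2).
  assert (HT : 0 <= T) by (pose proof (Rabs_pos K1); pose proof (Rabs_pos K2); unfold T; lra).
  exists (M + T). intros b c a x Hb Hc Ha.
  assert (Hinit5 : forall y, exp a <= y <= exp (5 * a) ->
                   osc_dominated (dmv_integrand g b c a) M b c 1 y).
  { intros y Hy. pose proof (exp_ineq1_le a). apply Hinit; try lra.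
    replace (a * (INR 4 + 1)) with (5 * a) by (simpl; ring). lra. }
  change (DMV_I g b c a x) with (- RInt (dmv_integrand g b c a) 1 x).
  split.
  - intros Hx. apply (dmv_integral_asymptotic g K1 K2 Hcont HC1 HK1 HK2 b c a); try lra.
    apply Hinit5. split; [apply exp_le_compat|]; lra.
  - intros Hx. destruct (osc_dominated_le _ M (M + T) b c 1 x ltac:(lra) ltac:(lra)
                           (Hinit5 x ltac:(lra))) as [_ Hle].
    rewrite Rabs_Ropp. eapply Rle_trans; [exact Hle|]. right. field. lra.
Qed.
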